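(* Let $\mathrm{Pr}>0$, $\mathrm{Sc}>0$ with $\mathrm{Pr}\neq 1$, $\mathrm{Sc}\neq 1$, and let $\mathrm{Gr},\mathrm{Gc}\in\mathbb{R}$ and $\alpha\in\mathbb{R}$ be constants. Put $$a=-\frac{\mathrm{Gr}\cos\alpha}{\mathrm{Pr}-1},\qquad b=-\frac{\mathrm{Gc}\cos\alpha}{\mathrm{Sc}-1},\qquad \eta=\frac{Y}{2\sqrt{t}}\quad (Y\ge 0,\ t>0).$$ Consider the initial–boundary value problem for functions $V(Y,t),T(Y,t),\varphi(Y,t)$ on $Y\ge 0$: $$\frac{\partial V}{\partial t}=\mathrm{Gr}\,T\cos\alpha+\mathrm{Gc}\,\varphi\cos\alpha+\frac{\partial^2 V}{\partial Y^2},\qquad \mathrm{Pr}\frac{\partial T}{\partial t}=\frac{\partial^2 T}{\partial Y^2},\qquad \mathrm{Sc}\frac{\partial \varphi}{\partial t}=\frac{\partial^2 \varphi}{\partial Y^2},$$ with $V=T=\varphi=0$ for all $Y$ at $t\le 0$; $V=t^2$, $T=1$, $\varphi=1$ at $Y=0$ for $t>0$; and $V\to 0$, $T\to0$, $\varphi\to 0$ as $Y\to\infty$. Then the solution (obtained by the Laplace transform method) is given for $t>0$ by $$T=\operatorname{erfc}(\eta\sqrt{\mathrm{Pr}}),\qquad \varphi=\operatorname{erfc}(\eta\sqrt{\mathrm{Sc}}),$$ $$\begin{aligned}V={}&\frac{t^2}{3}\Big[(3+12\eta^2+4\eta^4)\operatorname{erfc}(\eta)-\frac{\eta}{\sqr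t{\pi}}(10+4\eta^2)e^{-\eta^2}\Big]-(a+b)\,t\Big[(1+2\eta^2)\operatorname{erfc}(\eta)-\frac{2\eta}{\sqrt{\pi}}e^{-\eta^2}\Big]\\&+a\,t\Big[(1+2\eta^2\mathrm{Pr})\operatorname{erfc}(\eta\sqrt{\mathrm{Pr}})-\frac{2\eta\sqrt{\mathrm{Pr}}}{\sqrt{\pi}}e^{-\eta^2\mathrm{Pr}}\Big]+b\,t\Big[(1+2\eta^2\mathrm{Sc})\operatorname{erfc}(\eta\sqrt{\mathrm{Sc}})-\frac{2\eta\sqrt{\mathrm{Sc}}}{\sqrt{\pi}}e^{-\eta^2\mathrm{Sc}}\Big].\end{aligned}$$
   Context: This is the nondimensional model of unsteady free-convection flow past a vertical plate inclined at angle $\alpha$, started with velocity proportional to $t^2$, with plate temperature and concentration suddenly raised: $V$ is the velocity, $T$ the temperature, $\varphi$ the concentration, $\mathrm{Gr}$ and $\mathrm{Gc}$ the thermal and mass Grashof numbers, $\mathrm{Pr}$ the Prandtl number and $\mathrm{Sc}$ the Schmidt number. $\operatorname{erfc}$ denotes the complementary error function $\operatorname{erfc}(x)=\frac{2}{\sqrt\pi}\int_x^\infty e^{-s^2}\,ds$. *)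

From Stdlib Require Import Reals.
From Coquelicot Require Import Coquelicot.
Open Scope R_scope.

Definition erfc (x : R) : R :=
  2 / sqrt PI * RInt_gen (fun s => exp (- s ^ 2)) (at_point x) (Rbar_locally p_infty).

Definition eta (Y t : R) : R := Y / (2 * sqrt t).

Definition acoef (Gr Pr alpha : R) : R := - (Gr * cos alpha) / (Pr - 1).
Definition bcoef (Gc Sc alpha : R) : R := - (Gc * cos alpha) / (Sc - 1).

Definition Tsol (Pr : R) (Y t : R) : R :=
  if Rle_dec t 0 then 0 else erfc (eta Y t * sqrt Pr).

Definition Phisol (Sc : R) (Y t : R) : R :=
  if Rle_dec t 0 then 0 else erfc (eta Y t * sqrt Sc).

Definition Vsol (Pr Sc Gr Gc alpha : R) (Y t : R) : R :=
  if Rle_dec t 0 then 0 else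
  let e := eta Y t in
  let a := acoef Gr Pr alpha in
  let b := bcoef Gc Sc alpha in
    t ^ 2 / 3 * ((3 + 12 * e ^ 2 + 4 * e ^ 4) * erfc e
                 - e / sqrt PI * (10 + 4 * e ^ 2) * exp (- e ^ 2))
  - (a + b) * t * ((1 + 2 * e ^ 2) * erfc e - 2 * e / sqrt PI * exp (- e ^ 2))
  + a * t * ((1 + 2 * e ^ 2 * Pr) * erfc (e * sqrt Pr)
             - 2 * e * sqrt Pr / sqrt PI * exp (- e ^ 2 * Pr))
  + b * t * ((1 + 2 * e ^ 2 * Sc) * erfc (e * sqrt Sc)
             - 2 * e * sqrt Sc / sqrt PI * exp (- e ^ 2 * Sc)).

(* The Gaussian integral gives erfc 0 = 1: with G(x) = int_0^x e^(-s^2) ds and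
   H(x) = int_0^1 e^(-x^2 (1+u^2)) / (1+u^2) du one has (G^2 + H)' = 0, so G^2 + H = H(0) = pi/4,
   while 0 <= H(x) <= e^(-x^2) -> 0.  The tail bound erfc x <= e^(-x^2) / sqrt pi for x >= 1
   then makes x^k erfc x -> 0.

   Every term of T, phi and V has the form t^n f(c Y / (2 sqrt t)), which solves
   c^2 u_t = u_YY as soon as f'' + 2 x f' = 4 n f; erfc, 4 i^2erfc and 32 i^4erfc solve this
   ODE for n = 0, 1, 2.  In V the terms a t f(eta sqrt Pr) and b t f(eta sqrt Sc) diffuse at
   the wrong rate, and their defect
     a (1 - Pr) d/dt [t f(eta sqrt Pr)] = Gr cos alpha erfc(eta sqrt Pr)
   (and likewise for b) is exactly the buoyancy source.  The initial and far-field conditions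
   follow from f -> 0 at +oo. *)

From Stdlib Require Import Reals Lra Lia.
From Coquelicot Require Import Coquelicot.
Open Scope R_scope.

(** * The Gaussian integral *)

Definition gauss (s : R) : R := exp (- s ^ 2).

Lemma gauss_pos x : 0 < gauss x.
Proof. apply exp_pos. Qed.

Lemma is_derive_gauss x : is_derive gauss x (-2 * x * gauss x).
Proof. unfold gauss. auto_derive; [easy | ring_simplify; reflexivity]. Qed.

Lemma ex_derive_gauss x : ex_derive gauss x.
Proof. eexists; apply is_derive_gauss. Qed.

Lemma Derive_gauss x : Derive gauss x = -2 * x * gauss x.
Proof. apply is_derive_unique, is_derive_gauss. Qed.

Lemma continuous_gauss x : continuous gauss x.
Proof.
  apply (ex_derive_continuous (K := R_AbsRing) (V := R_NormedModule)), ex_derive_gauss.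
Qed.

Lemma ex_RInt_gauss a b : ex_RInt gauss a b.
Proof.
  apply (ex_RInt_continuous (V := R_CompleteNormedModule)); intros; apply continuous_gauss.
Qed.

Definition gauss_int (x : R) : R := RInt gauss 0 x.

Lemma gauss_int_0 : gauss_int 0 = 0.
Proof. unfold gauss_int. rewrite RInt_point. reflexivity. Qed.

Lemma is_derive_gauss_int x : is_derive gauss_int x (gauss x).
Proof.
  apply (is_derive_RInt gauss gauss_int 0); [|apply continuous_gauss].
  apply filter_forall; intros; apply (RInt_correct (V := R_CompleteNormedModule)), ex_RInt_gauss.
Qed.

Lemma gauss_int_sub x y : gauss_int y - gauss_int x = RInt gauss x y.
Proof.
  unfold gauss_int.
  rewrite <- (RInt_Chasles (V := R_CompleteNormedModule) gauss 0 x y) by apply ex_RInt_gauss.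
  unfold plus; simpl; ring.
Qed.

Lemma gauss_int_increasing x y : x <= y -> gauss_int x <= gauss_int y.
Proof.
  intros Hxy. enough (0 <= RInt gauss x y) by (rewrite <- gauss_int_sub in H; lra).
  apply RInt_ge_0; [exact Hxy | apply ex_RInt_gauss | intros; left; apply gauss_pos].
Qed.

Lemma one_add_sqr_pos u : 0 < 1 + u ^ 2.
Proof. nra. Qed.

Definition gauss_aux_integrand (x u : R) : R := exp (- x ^ 2 * (1 + u ^ 2)) / (1 + u ^ 2).

Definition gauss_aux (x : R) : R := RInt (gauss_aux_integrand x) 0 1.

Lemma is_derive_gauss_aux_integrand x u :
  is_derive (fun z => gauss_aux_integrand z u) x (-2 * x * exp (- x ^ 2 * (1 + u ^ 2))).
Proof.
  pose proof (one_add_sqr_pos u).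
  unfold gauss_aux_integrand. auto_derive; simpl in *; [lra | field; lra].
Qed.

Lemma ex_RInt_gauss_aux_integrand x a b : ex_RInt (gauss_aux_integrand x) a b.
Proof.
  apply (ex_RInt_continuous (V := R_CompleteNormedModule)); intros u _.
  apply (ex_derive_continuous (K := R_AbsRing) (V := R_NormedModule)).
  pose proof (one_add_sqr_pos u).
  unfold gauss_aux_integrand. auto_derive. simpl in *; lra.
Qed.

Lemma continuity_2d_gauss_aux_integrand_dx x u :
  continuity_2d_pt (fun x u => -2 * x * exp (- x ^ 2 * (1 + u ^ 2))) x u.
Proof.
  apply continuity_2d_pt_mult.
  - apply continuity_2d_pt_mult; [apply continuity_2d_pt_const | apply continuity_2d_pt_id1].
  - apply continuity_1d_2d_pt_comp; [apply derivable_continuous_pt, derivable_pt_exp|].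
    apply continuity_2d_pt_mult.
    + apply continuity_2d_pt_opp, continuity_2d_pt_mult;
        [apply continuity_2d_pt_id1 | apply continuity_2d_pt_mult;
          [apply continuity_2d_pt_id1 | apply continuity_2d_pt_const]].
    + apply continuity_2d_pt_plus; [apply continuity_2d_pt_const|].
      apply continuity_2d_pt_mult;
        [apply continuity_2d_pt_id2 | apply continuity_2d_pt_mult;
          [apply continuity_2d_pt_id2 | apply continuity_2d_pt_const]].
Qed.

Lemma RInt_gauss_dilation x : RInt (fun u => x * gauss (x * u)) 0 1 = gauss_int x.
Proof.
  rewrite (RInt_ext _ (fun u => scal x (gauss (x * u + 0)))).
  - rewrite (RInt_comp_lin (V := R_CompleteNormedModule)) by apply ex_RInt_gauss.
    unfold gauss_int. f_equal; ring.
  - intros u _. rewrite Rplus_0_r. reflexivity.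
Qed.

Lemma is_derive_gauss_aux x : is_derive gauss_aux x (-2 * gauss x * gauss_int x).
Proof.
  unfold gauss_aux.
  replace (-2 * gauss x * gauss_int x)
    with (RInt (fun u => Derive (fun z => gauss_aux_integrand z u) x) 0 1).
  - apply (is_derive_RInt_param gauss_aux_integrand).
    + apply filter_forall; intros y u _. eexists; apply is_derive_gauss_aux_integrand.
    + intros u _.
      apply (continuity_2d_pt_ext (fun x u => -2 * x * exp (- x ^ 2 * (1 + u ^ 2)))).
      * intros y v. symmetry. apply is_derive_unique, is_derive_gauss_aux_integrand.
      * apply continuity_2d_gauss_aux_integrand_dx.
    + apply filter_forall; intros; apply ex_RInt_gauss_aux_integrand.
  - rewrite <- RInt_gauss_dilation, <- (RInt_scal (V := R_CompleteNormedModule)).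
    + apply RInt_ext; intros u _.
      erewrite is_derive_unique by apply is_derive_gauss_aux_integrand.
      replace (- x ^ 2 * (1 + u ^ 2)) with (- x ^ 2 + - (x * u) ^ 2) by ring.
      rewrite exp_plus. unfold gauss, scal; simpl; unfold mult; simpl. ring.
    + apply (ex_RInt_continuous (V := R_CompleteNormedModule)); intros u _.
      apply (ex_derive_continuous (K := R_AbsRing) (V := R_NormedModule)).
      unfold gauss. auto_derive. easy.
Qed.

Lemma atan_RInt : RInt (fun u => / (1 + u ^ 2)) 0 1 = PI / 4.
Proof.
  apply is_RInt_unique.
  replace (PI / 4) with (minus (atan 1) (atan 0))
    by (rewrite atan_1, atan_0; unfold minus, plus, opp; simpl; ring).
  apply (is_RInt_derive (V := R_CompleteNormedModule)).
  - intros u _. apply is_derive_Reals, derivable_pt_lim_atan.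
  - intros u _. apply (ex_derive_continuous (K := R_AbsRing) (V := R_NormedModule)).
    pose proof (one_add_sqr_pos u). auto_derive. simpl in *; lra.
Qed.

Lemma gauss_aux_0 : gauss_aux 0 = PI / 4.
Proof.
  rewrite <- atan_RInt. apply RInt_ext; intros u _.
  unfold gauss_aux_integrand. rewrite pow_i, Ropp_0, Rmult_0_l, exp_0 by lia.
  apply Rmult_1_l.
Qed.

Lemma gauss_int_sqr_add_aux x : gauss_int x ^ 2 + gauss_aux x = PI / 4.
Proof.
  set (F x := gauss_int x ^ 2 + gauss_aux x).
  assert (HF : forall y, is_derive F y zero).
  { intros y. replace (@zero R_NormedModule)
      with (INR 2 * gauss y * gauss_int y ^ 1 + -2 * gauss y * gauss_int y)
      by (unfold zero; simpl; ring).
    apply (is_derive_plus (K := R_AbsRing) (V := R_NormedModule)).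
    - apply is_derive_pow, is_derive_gauss_int.
    - apply is_derive_gauss_aux. }
  change (F x = PI / 4).
  replace (PI / 4) with (F 0) by (unfold F; rewrite gauss_int_0, gauss_aux_0; ring).
  destruct (Rtotal_order x 0) as [Hx | [-> | Hx]].
  - apply eq_is_derive; auto.
  - reflexivity.
  - symmetry; apply eq_is_derive; auto.
Qed.

Lemma gauss_le_1 x : gauss x <= 1.
Proof.
  unfold gauss. rewrite exp_Ropp, <- Rinv_1.
  pose proof (exp_ineq1_le (x ^ 2)). pose proof (pow2_ge_0 x).
  apply Rinv_le_contravar; lra.
Qed.

Lemma gauss_aux_bounds x : 0 <= gauss_aux x <= gauss x.
Proof.
  assert (Hint : forall u, 0 <= u <= 1 -> 0 <= gauss_aux_integrand x u <= gauss x).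
  { intros u _. pose proof (one_add_sqr_pos u) as Hu.
    assert (E : gauss_aux_integrand x u = gauss x * (gauss (x * u) * / (1 + u ^ 2))).
    { unfold gauss_aux_integrand, gauss. rewrite <- Rmult_assoc, <- exp_plus. unfold Rdiv.
      do 2 f_equal. ring. }
    assert (Hw : 0 <= gauss (x * u) * / (1 + u ^ 2) <= 1).
    { pose proof (gauss_pos (x * u)). pose proof (gauss_le_1 (x * u)).
      pose proof (Rinv_0_lt_compat _ Hu). pose proof (pow2_ge_0 u).
      assert (/ (1 + u ^ 2) <= 1) by (rewrite <- Rinv_1; apply Rinv_le_contravar; lra).
      split; nra. }
    rewrite E. pose proof (gauss_pos x). split; nra. }
  split.
  - apply RInt_ge_0; [lra | apply ex_RInt_gauss_aux_integrand | intros u Hu; apply Hint; lra].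
  - replace (gauss x) with (RInt (fun _ => gauss x) 0 1)
      by (rewrite RInt_const; unfold scal; simpl; unfold mult; simpl; ring).
    apply RInt_le; [lra | apply ex_RInt_gauss_aux_integrand | apply ex_RInt_const |].
    intros u Hu. apply Hint; lra.
Qed.

Lemma pow_div_fact_le_exp n x : 0 <= x -> x ^ n / INR (Factorial.fact n) <= exp x.
Proof.
  intros Hx. eapply Rle_trans; [| apply (exp_ge_taylor x n Hx)].
  assert (Hterm : forall k, 0 <= x ^ k / INR (Factorial.fact k)).
  { intros k. apply Rle_mult_inv_pos; [apply pow_le; lra | apply INR_fact_lt_0]. }
  destruct n as [| n]; [apply Rle_refl|].
  rewrite tech5. pose proof (cond_pos_sum _ n Hterm). lra.
Qed.

Lemma pow_mul_gauss_le k x : 1 <= x -> x ^ k * gauss x <= INR (Factorial.fact (S k)) / x.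
Proof.
  intros Hx. set (C := INR (Factorial.fact (S k))).
  assert (HC : 0 < C) by apply INR_fact_lt_0.
  assert (Hexp : (x ^ 2) ^ S k / C <= exp (x ^ 2)) by (apply pow_div_fact_le_exp, pow2_ge_0).
  assert (Hpow : x ^ S k <= (x ^ 2) ^ S k) by (rewrite <- pow_mult; apply Rle_pow; lia || lra).
  pose proof (exp_pos (x ^ 2)).
  unfold gauss. rewrite exp_Ropp.
  replace (x ^ k * / exp (x ^ 2)) with (x ^ S k / (x * exp (x ^ 2)))
    by (rewrite <- tech_pow_Rmult; field; split; lra).
  replace (C / x) with (C * exp (x ^ 2) / (x * exp (x ^ 2))) by (field; split; lra).
  apply Rmult_le_compat_r; [apply Rlt_le, Rinv_0_lt_compat; nra|].
  apply (Rle_trans _ _ _ Hpow).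
  replace ((x ^ 2) ^ S k) with ((x ^ 2) ^ S k / C * C) by (field; lra). nra.
Qed.

Lemma is_lim_pow_mul_gauss k : is_lim (fun x => x ^ k * gauss x) p_infty 0.
Proof.
  set (C := INR (Factorial.fact (S k))).
  apply (is_lim_le_le_loc (fun _ => 0) (fun x => C * / x)).
  - exists 1. intros x Hx. split.
    + apply Rlt_le, Rmult_lt_0_compat; [apply pow_lt; lra | apply gauss_pos].
    + apply pow_mul_gauss_le. lra.
  - apply is_lim_const.
  - replace (Finite 0) with (Rbar_mult C (Rbar_inv p_infty)) by (simpl; f_equal; ring).
    apply is_lim_scal_l, is_lim_inv; [apply is_lim_id | discriminate].
Qed.

Lemma is_lim_gauss : is_lim gauss p_infty 0.
Proof.
  apply (is_lim_ext (fun x => x ^ 0 * gauss x)); [intros; simpl; ring|].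
  apply is_lim_pow_mul_gauss.
Qed.

Lemma is_lim_gauss_int : is_lim gauss_int p_infty (sqrt PI / 2).
Proof.
  assert (Hsqr : is_lim (fun x => gauss_int x ^ 2) p_infty (PI / 4)).
  { apply (is_lim_ext (fun x => PI / 4 - gauss_aux x)).
    - intros x. rewrite <- (gauss_int_sqr_add_aux x). ring.
    - replace (Finite (PI / 4)) with (Finite (PI / 4 - 0)) by (f_equal; ring).
      apply is_lim_minus'; [apply is_lim_const|].
      apply (is_lim_le_le_loc (fun _ => 0) gauss);
        [exists 0; intros; apply gauss_aux_bounds | apply is_lim_const | apply is_lim_gauss]. }
  apply (is_lim_ext_loc (fun x => sqrt (gauss_int x ^ 2))).
  - exists 0. intros x Hx. apply sqrt_pow2.
    rewrite <- gauss_int_0. apply gauss_int_increasing. lra.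
  - replace (sqrt PI / 2) with (sqrt (PI / 4)).
    + apply (is_lim_comp_continuous _ sqrt _ _ Hsqr).
      apply continuity_pt_filterlim, continuity_pt_sqrt.
      pose proof PI_RGT_0. lra.
    + rewrite sqrt_div_alt by lra. f_equal.
      replace 4 with (2 ^ 2) by ring. apply sqrt_pow2. lra.
Qed.

(** * The complementary error function *)

Lemma sqrt_PI_pos : 0 < sqrt PI.
Proof. apply sqrt_lt_R0, PI_RGT_0. Qed.

Lemma erfc_gauss_int x : erfc x = 1 - 2 / sqrt PI * gauss_int x.
Proof.
  assert (Htail : is_RInt_gen gauss (at_point x) (Rbar_locally p_infty)
                              (sqrt PI / 2 - gauss_int x)).
  { apply (is_RInt_gen_ext (Derive gauss_int)).
    - apply filter_forall. intros ab y _. apply is_derive_unique, is_derive_gauss_int.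
    - apply is_RInt_gen_Derive.
      + apply filter_forall. intros ab y _. eexists; apply is_derive_gauss_int.
      + apply filter_forall. intros ab y _.
        apply (continuous_ext gauss); [|apply continuous_gauss].
        intros; symmetry; apply is_derive_unique, is_derive_gauss_int.
      + intros P HP. unfold filtermap, at_point. apply locally_singleton. exact HP.
      + apply is_lim_gauss_int. }
  unfold erfc. change (fun s => exp (- s ^ 2)) with gauss.
  rewrite (is_RInt_gen_unique gauss _ Htail).
  pose proof sqrt_PI_pos. field. lra.
Qed.

Lemma erfc_0 : erfc 0 = 1.
Proof. rewrite erfc_gauss_int, gauss_int_0. ring. Qed.

Lemma is_derive_erfc x : is_derive erfc x (-2 / sqrt PI * gauss x).
Proof.
  apply (is_derive_ext (fun x => 1 - 2 / sqrt PI * gauss_int x));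
    [intros; symmetry; apply erfc_gauss_int|].
  replace (-2 / sqrt PI * gauss x) with (0 - 2 / sqrt PI * gauss x) by (unfold Rdiv; ring).
  apply (is_derive_minus (K := R_AbsRing) (V := R_NormedModule)).
  - apply (is_derive_const (K := R_AbsRing) (V := R_NormedModule)).
  - apply is_derive_scal, is_derive_gauss_int.
Qed.

Lemma ex_derive_erfc x : ex_derive erfc x.
Proof. eexists; apply is_derive_erfc. Qed.

Lemma Derive_erfc x : Derive erfc x = -2 / sqrt PI * gauss x.
Proof. apply is_derive_unique, is_derive_erfc. Qed.

Lemma gauss_int_le_lim x : gauss_int x <= sqrt PI / 2.
Proof.
  apply (is_lim_le_loc (fun _ => gauss_int x) gauss_int p_infty (gauss_int x) (sqrt PI / 2));
    [exists x; intros; apply gauss_int_increasing; lra | apply is_lim_const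
    | apply is_lim_gauss_int].
Qed.

Lemma erfc_nonneg x : 0 <= erfc x.
Proof.
  rewrite erfc_gauss_int. pose proof (gauss_int_le_lim x). pose proof sqrt_PI_pos.
  replace (1 - 2 / sqrt PI * gauss_int x) with (2 / sqrt PI * (sqrt PI / 2 - gauss_int x))
    by (field; lra).
  apply Rmult_le_pos; [apply Rlt_le, Rdiv_lt_0_compat |]; lra.
Qed.

Lemma RInt_id_mul_gauss x y : RInt (fun s => s * gauss s) x y = (gauss x - gauss y) / 2.
Proof.
  apply is_RInt_unique.
  replace ((gauss x - gauss y) / 2) with (minus (- gauss y / 2) (- gauss x / 2))
    by (unfold minus, plus, opp; simpl; field).
  apply (is_RInt_derive (V := R_CompleteNormedModule) (fun s => - gauss s / 2)).
  - intros s _. unfold gauss. auto_derive; [easy|].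
    replace (s * (s * 1)) with (s ^ 2) by ring. field.
  - intros t _. apply (ex_derive_continuous (K := R_AbsRing) (V := R_NormedModule)).
    unfold gauss. auto_derive. easy.
Qed.

(* On [x, +oo) with x >= 1, gauss s <= s * gauss s, whose integral is explicit. *)
Lemma gauss_int_tail_bound x : 1 <= x -> sqrt PI / 2 <= gauss_int x + gauss x / 2.
Proof.
  intros Hx.
  apply (is_lim_le_loc gauss_int (fun _ => gauss_int x + gauss x / 2) p_infty
           (sqrt PI / 2) (gauss_int x + gauss x / 2));
    [| apply is_lim_gauss_int | apply is_lim_const].
  exists x. intros y Hy.
  assert (RInt gauss x y <= RInt (fun s => s * gauss s) x y).
  { apply RInt_le; [lra | apply ex_RInt_gauss | |].
    - apply (ex_RInt_continuous (V := R_CompleteNormedModule)); intros.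
      apply (ex_derive_continuous (K := R_AbsRing) (V := R_NormedModule)).
      unfold gauss. auto_derive. easy.
    - intros s Hs. pose proof (gauss_pos s). nra. }
  rewrite <- gauss_int_sub, RInt_id_mul_gauss in H. pose proof (gauss_pos y). lra.
Qed.

Lemma erfc_le_gauss x : 1 <= x -> erfc x <= gauss x / sqrt PI.
Proof.
  intros Hx. rewrite erfc_gauss_int.
  pose proof (gauss_int_tail_bound x Hx). pose proof sqrt_PI_pos.
  replace (gauss x / sqrt PI) with (1 - 2 / sqrt PI * (sqrt PI / 2 - gauss x / 2))
    by (field; lra).
  apply Rplus_le_compat_l, Ropp_le_contravar, Rmult_le_compat_l;
    [apply Rlt_le, Rdiv_lt_0_compat |]; lra.
Qed.

Lemma is_lim_pow_mul_erfc k : is_lim (fun x => x ^ k * erfc x) p_infty 0.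
Proof.
  apply (is_lim_le_le_loc (fun _ => 0) (fun x => / sqrt PI * (x ^ k * gauss x))).
  - exists 1. intros x Hx.
    pose proof (erfc_nonneg x). pose proof (erfc_le_gauss x ltac:(lra)).
    pose proof (pow_lt x k ltac:(lra)).
    split; [nra|].
    replace (/ sqrt PI * (x ^ k * gauss x)) with (x ^ k * (gauss x / sqrt PI))
      by (unfold Rdiv; ring).
    apply Rmult_le_compat_l; lra.
  - apply is_lim_const.
  - replace (Finite 0) with (Rbar_mult (/ sqrt PI) 0) by (simpl; f_equal; ring).
    apply is_lim_scal_l, is_lim_pow_mul_gauss.
Qed.

(** * Self-similar solutions of the heat equation *)

Lemma eta_mul_r Y t c : eta Y t * c = eta (Y * c) t.
Proof. unfold eta, Rdiv. ring. Qed.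

Lemma eta_0_l t : eta 0 t = 0.
Proof. unfold eta, Rdiv. apply Rmult_0_l. Qed.

Lemma filterlim_eta_at_right_0 Y : 0 < Y ->
  filterlim (eta Y) (at_right 0) (Rbar_locally p_infty).
Proof.
  intros HY P [M HM].
  set (N := Rmax M 1).
  assert (HN : 0 < N) by (pose proof (Rmax_r M 1); unfold N; lra).
  assert (Hd : 0 < (Y / (2 * N)) ^ 2) by (apply pow_lt, Rdiv_lt_0_compat; lra).
  exists (mkposreal _ Hd). intros s Hs Hs0. apply HM.
  change (Rabs (s + - 0) < (Y / (2 * N)) ^ 2) in Hs.
  rewrite Ropp_0, Rplus_0_r, Rabs_right in Hs by lra.
  assert (Hsqrt : sqrt s < Y / (2 * N)).
  { rewrite <- (sqrt_pow2 (Y / (2 * N))) by (apply Rlt_le, Rdiv_lt_0_compat; lra).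
    apply sqrt_lt_1_alt; lra. }
  pose proof (sqrt_lt_R0 s Hs0). pose proof (Rmax_l M 1).
  apply (Rle_lt_trans _ N); [exact H0|]. unfold eta.
  apply (Rmult_lt_reg_r (2 * sqrt s)); [lra|].
  replace (Y / (2 * sqrt s) * (2 * sqrt s)) with Y by (field; lra).
  apply (Rmult_lt_compat_l (2 * N)) in Hsqrt; [|lra].
  replace (2 * N * (Y / (2 * N))) with Y in Hsqrt by (field; lra). lra.
Qed.

Section LimitsToZero.

Context {T : Type} {F : (T -> Prop) -> Prop} {FF : Filter F}.

Lemma filterlim_plus_0 (f g : T -> R) :
  filterlim f F (locally 0) -> filterlim g F (locally 0) ->
  filterlim (fun s => f s + g s) F (locally 0).
Proof.
  intros Hf Hg.
  pose proof (filterlim_comp_2 f g Rplus Hf Hg (filterlim_plus (V := R_NormedModule) 0 0)) as H.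
  change (plus 0 0) with (0 + 0) in H. rewrite Rplus_0_r in H. exact H.
Qed.

Lemma filterlim_scal_0 (k : R) (f : T -> R) :
  filterlim f F (locally 0) -> filterlim (fun s => k * f s) F (locally 0).
Proof.
  intros Hf.
  pose proof (filterlim_comp_2 (fun _ => k) f Rmult (filterlim_const k) Hf
                (filterlim_scal (V := R_NormedModule) k 0)) as H.
  change (scal k 0) with (k * 0) in H. rewrite Rmult_0_r in H. exact H.
Qed.

End LimitsToZero.

Lemma eventually_pos_at_right_0 : at_right 0 (fun s => 0 < s).
Proof. unfold at_right, within. apply filter_forall. easy. Qed.

Lemma is_lim_0_of_at_right (f : R -> R) :
  (forall s, s <= 0 -> f s = 0) -> filterlim f (at_right 0) (locally 0) -> is_lim f 0 0.
Proof.
  intros Hneg Hright P HP.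
  specialize (Hright P HP).
  change (locally 0 (fun s => s <> 0 -> P (f s))).
  apply (filter_imp (fun s => 0 < s -> P (f s))); [|exact Hright].
  intros s Hs _. destruct (Rle_dec s 0) as [Hle | Hgt].
  - rewrite (Hneg s Hle). apply locally_singleton. exact HP.
  - apply Hs. lra.
Qed.

Definition self_similar (n : nat) (c : R) (f : R -> R) (Y t : R) : R :=
  t ^ n * f (eta Y t * c).

Definition similarity_profile (n : nat) (f f' : R -> R) : Prop :=
  (forall x, is_derive f x (f' x)) /\
  (forall x, is_derive f' x (4 * INR n * f x - 2 * x * f' x)).

Lemma is_derive_self_similar_Y n c f f' Y t : 0 < t ->
  (forall x, is_derive f x (f' x)) ->
  is_derive (fun y => self_similar n c f y t) Y (c / (2 * sqrt t) * self_similar n c f' Y t).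
Proof.
  intros Ht Hf. pose proof (sqrt_lt_R0 t Ht). unfold self_similar, eta.
  auto_derive; [eexists; apply Hf|].
  rewrite (is_derive_unique _ _ _ (Hf _)). unfold Rdiv. field. lra.
Qed.

Lemma INR_mul_pow_pred n t : t <> 0 -> INR n * t ^ pred n = INR n * t ^ n / t.
Proof. intros Ht. destruct n; simpl; field; exact Ht. Qed.

Lemma is_derive_self_similar_t n c f f' Y t : 0 < t ->
  (forall x, is_derive f x (f' x)) ->
  is_derive (fun s => self_similar n c f Y s) t
    (self_similar n c (fun x => INR n * f x - x * f' x / 2) Y t / t).
Proof.
  intros Ht Hf. pose proof (sqrt_lt_R0 t Ht). unfold self_similar, eta.
  auto_derive; [repeat split; try lra; eexists; apply Hf|].
  rewrite (is_derive_unique _ _ _ (Hf _)).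
  replace (2 * sqrt t * (2 * sqrt t)) with (4 * (sqrt t * sqrt t)) by ring.
  rewrite sqrt_sqrt, INR_mul_pow_pred by lra. unfold Rdiv. field. lra.
Qed.

Lemma is_derive_self_similar_YY n c f f' Y t : 0 < t -> similarity_profile n f f' ->
  is_derive (fun y => Derive (fun z => self_similar n c f z t) y) Y
    (c ^ 2 * (self_similar n c (fun x => INR n * f x - x * f' x / 2) Y t / t)).
Proof.
  intros Ht [Hf Hf']. pose proof (sqrt_lt_R0 t Ht).
  apply (is_derive_ext (fun y => c / (2 * sqrt t) * self_similar n c f' y t)).
  { intros y. symmetry. apply is_derive_unique, is_derive_self_similar_Y; assumption. }
  replace (c ^ 2 * (self_similar n c (fun x => INR n * f x - x * f' x / 2) Y t / t))
    with (c / (2 * sqrt t) * (c / (2 * sqrt t)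
            * self_similar n c (fun x => 4 * INR n * f x - 2 * x * f' x) Y t)).
  - apply is_derive_scal, is_derive_self_similar_Y; assumption.
  - assert (Hsq : forall X, c / (2 * sqrt t) * (c / (2 * sqrt t) * X) = c ^ 2 * X / (4 * t)).
    { intros X. replace (4 * t) with (4 * (sqrt t * sqrt t)) by (rewrite sqrt_sqrt; lra).
      field. lra. }
    rewrite Hsq. unfold self_similar. field. lra.
Qed.

Lemma is_lim_eta_mul_Y t c : 0 < t -> 0 < c -> is_lim (fun Y => eta Y t * c) p_infty p_infty.
Proof.
  intros Ht Hc P [M HM]. pose proof (sqrt_lt_R0 t Ht).
  exists (M * (2 * sqrt t) / c). intros Y HY. apply HM. unfold eta.
  apply (Rmult_lt_reg_r (2 * sqrt t / c)); [apply Rdiv_lt_0_compat; lra|].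
  replace (Y / (2 * sqrt t) * c * (2 * sqrt t / c)) with Y by (field; lra).
  replace (M * (2 * sqrt t / c)) with (M * (2 * sqrt t) / c) by (field; lra). exact HY.
Qed.

Lemma is_lim_self_similar_Y n c f t : 0 < t -> 0 < c -> is_lim f p_infty 0 ->
  is_lim (fun Y => self_similar n c f Y t) p_infty 0.
Proof.
  intros Ht Hc Hf. unfold self_similar.
  replace (Finite 0) with (Rbar_mult (t ^ n) 0) by (simpl; f_equal; ring).
  apply is_lim_scal_l. apply (is_lim_comp f _ _ _ p_infty Hf).
  - apply is_lim_eta_mul_Y; assumption.
  - exists 0. intros; discriminate.
Qed.

Lemma self_similar_at_right_0 n c f Y : 0 < Y -> 0 < c -> is_lim f p_infty 0 ->
  filterlim (fun s => self_similar n c f Y s) (at_right 0) (locally 0).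
Proof.
  intros HY Hc Hf. unfold self_similar.
  replace 0 with (0 ^ n * 0) at 2 by ring.
  apply (filterlim_comp_2 (F := at_right 0) (G := locally (0 ^ n)) (H := locally 0)
           (fun s => s ^ n) (fun s => f (eta Y s * c)) Rmult).
  - eapply filterlim_filter_le_1; [apply filter_le_within|].
    apply continuity_pt_filterlim, derivable_continuous_pt, derivable_pt_pow.
  - apply (filterlim_comp _ _ _ _ f _ (Rbar_locally p_infty)); [| exact Hf].
    apply (filterlim_ext (fun s => eta (Y * c) s)); [intros; symmetry; apply eta_mul_r|].
    apply filterlim_eta_at_right_0. nra.
  - apply (filterlim_mult (K := R_AbsRing)).
Qed.

(** * The profiles of T, phi and V *)

Ltac derive_erfc_gauss :=
  auto_derive; [repeat split; auto using ex_derive_erfc, ex_derive_gauss |];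
  rewrite ?Derive_erfc, ?Derive_gauss; pose proof sqrt_PI_pos; simpl; field; lra.

Lemma erfc_profile : similarity_profile 0 erfc (fun x => -2 / sqrt PI * gauss x).
Proof. split; intros x; [apply is_derive_erfc | derive_erfc_gauss]. Qed.

(* [erfc2] and [erfc4] are 4 i^2erfc and 32 i^4erfc, repeated integrals of erfc. *)
Definition erfc2 (x : R) : R := (1 + 2 * x ^ 2) * erfc x - 2 * x / sqrt PI * gauss x.
Definition erfc2' (x : R) : R := 4 * x * erfc x - 4 / sqrt PI * gauss x.

Definition erfc4 (x : R) : R :=
  ((3 + 12 * x ^ 2 + 4 * x ^ 4) * erfc x - x / sqrt PI * (10 + 4 * x ^ 2) * gauss x) / 3.
Definition erfc4' (x : R) : R :=
  ((24 * x + 16 * x ^ 3) * erfc x - (16 + 16 * x ^ 2) / sqrt PI * gauss x) / 3.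

Lemma erfc2_profile : similarity_profile 1 erfc2 erfc2'.
Proof. unfold erfc2, erfc2'. split; intros x; derive_erfc_gauss. Qed.

Lemma erfc4_profile : similarity_profile 2 erfc4 erfc4'.
Proof. unfold erfc4, erfc4'. split; intros x; derive_erfc_gauss. Qed.

Lemma erfc2_rate x : INR 1 * erfc2 x - x * erfc2' x / 2 = erfc x.
Proof. unfold erfc2, erfc2'. pose proof sqrt_PI_pos. simpl. field. lra. Qed.

Lemma is_lim_erfc : is_lim erfc p_infty 0.
Proof.
  apply (is_lim_ext (fun x => x ^ 0 * erfc x)); [intros; simpl; ring|].
  apply is_lim_pow_mul_erfc.
Qed.

Lemma is_lim_erfc2 : is_lim erfc2 p_infty 0.
Proof.
  apply (is_lim_ext (fun x => (1 * (x ^ 0 * erfc x) + 2 * (x ^ 2 * erfc x))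
                              + (-2 / sqrt PI) * (x ^ 1 * gauss x))).
  { intros x. unfold erfc2, Rdiv. simpl. ring. }
  repeat apply filterlim_plus_0; apply filterlim_scal_0;
    first [apply is_lim_pow_mul_erfc | apply is_lim_pow_mul_gauss].
Qed.

Lemma is_lim_erfc4 : is_lim erfc4 p_infty 0.
Proof.
  apply (is_lim_ext (fun x => ((1 * (x ^ 0 * erfc x) + 4 * (x ^ 2 * erfc x))
                               + 4 / 3 * (x ^ 4 * erfc x))
                              + ((-10 / (3 * sqrt PI)) * (x ^ 1 * gauss x)
                                 + (-4 / (3 * sqrt PI)) * (x ^ 3 * gauss x)))).
  { intros x. unfold erfc4. pose proof sqrt_PI_pos. simpl. field. lra. }
  repeat apply filterlim_plus_0; apply filterlim_scal_0;
    first [apply is_lim_pow_mul_erfc | apply is_lim_pow_mul_gauss].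
Qed.

Lemma derivatives_ext_pos (u w : R -> R -> R) (Y t dt dyy : R) : 0 < t ->
  (forall y s, 0 < s -> u y s = w y s) ->
  is_derive (fun s => u Y s) t dt ->
  (forall y, ex_derive (fun z => u z t) y) ->
  is_derive (fun y => Derive (fun z => u z t) y) Y dyy ->
  ex_derive (fun s => w Y s) t /\ ex_derive (fun y => w y t) Y /\
  ex_derive (fun y => Derive (fun z => w z t) y) Y /\
  Derive (fun s => w Y s) t = dt /\
  Derive (fun y => Derive (fun z => w z t) y) Y = dyy.
Proof.
  intros Ht Huw Hdt HdY Hdyy.
  assert (Hwt : is_derive (fun s => w Y s) t dt).
  { apply (is_derive_ext_loc (fun s => u Y s)); [|exact Hdt].
    apply (filter_imp (fun s => 0 < s)); [intros; apply Huw; assumption | apply (open_gt 0 t Ht)]. }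
  assert (HDw : forall y, Derive (fun z => w z t) y = Derive (fun z => u z t) y).
  { intros y. apply Derive_ext. intros z. symmetry. apply Huw, Ht. }
  assert (Hwyy : is_derive (fun y => Derive (fun z => w z t) y) Y dyy).
  { apply (is_derive_ext (fun y => Derive (fun z => u z t) y));
      [intros; symmetry; apply HDw | exact Hdyy]. }
  repeat split.
  - eexists; exact Hwt.
  - apply (ex_derive_ext (fun z => u z t)); [intros; apply Huw, Ht | apply HdY].
  - eexists; exact Hwyy.
  - apply is_derive_unique, Hwt.
  - apply is_derive_unique, Hwyy.
Qed.

Lemma Tsol_self_similar P Y t : 0 < t -> Tsol P Y t = self_similar 0 (sqrt P) erfc Y t.
Proof. intros Ht. unfold Tsol, self_similar. destruct (Rle_dec t 0); [lra|]. simpl. ring. Qed.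

Lemma Tsol_heat P Y t : 0 < P -> 0 < t ->
  ex_derive (fun s => Tsol P Y s) t /\ ex_derive (fun y => Tsol P y t) Y /\
  ex_derive (fun y => Derive (fun z => Tsol P z t) y) Y /\
  P * Derive (fun s => Tsol P Y s) t = Derive (fun y => Derive (fun z => Tsol P z t) y) Y.
Proof.
  intros HP Ht.
  set (r := self_similar 0 (sqrt P)
              (fun x => INR 0 * erfc x - x * (-2 / sqrt PI * gauss x) / 2) Y t / t).
  destruct (derivatives_ext_pos (self_similar 0 (sqrt P) erfc) (Tsol P) Y t r (sqrt P ^ 2 * r) Ht)
    as (Hex_t & Hex_Y & Hex_YY & -> & ->).
  - intros y s Hs. symmetry. apply Tsol_self_similar, Hs.
  - apply is_derive_self_similar_t; [exact Ht | apply erfc_profile].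
  - intros y. eexists. apply is_derive_self_similar_Y; [exact Ht | apply erfc_profile].
  - apply is_derive_self_similar_YY; [exact Ht | apply erfc_profile].
  - repeat split; try assumption. rewrite pow2_sqrt by lra. reflexivity.
Qed.

Definition vmix (a b v0 v1 v2 v3 : R) : R := v0 + a * (v2 - v1) + b * (v3 - v1).

Lemma is_derive_vmix a b (f0 f1 f2 f3 : R -> R) d0 d1 d2 d3 x :
  is_derive f0 x d0 -> is_derive f1 x d1 -> is_derive f2 x d2 -> is_derive f3 x d3 ->
  is_derive (fun x => vmix a b (f0 x) (f1 x) (f2 x) (f3 x)) x (vmix a b d0 d1 d2 d3).
Proof.
  intros H0 H1 H2 H3. unfold vmix.
  repeat first
    [ assumption
    | apply (is_derive_minus (K := R_AbsRing) (V := R_NormedModule))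
    | apply (is_derive_plus (K := R_AbsRing) (V := R_NormedModule))
    | apply is_derive_scal ].
Qed.

Lemma filterlim_vmix_0 {T : Type} {F : (T -> Prop) -> Prop} {FF : Filter F}
  a b (f0 f1 f2 f3 : T -> R) :
  filterlim f0 F (locally 0) -> filterlim f1 F (locally 0) ->
  filterlim f2 F (locally 0) -> filterlim f3 F (locally 0) ->
  filterlim (fun s => vmix a b (f0 s) (f1 s) (f2 s) (f3 s)) F (locally 0).
Proof.
  intros H0 H1 H2 H3.
  apply (filterlim_ext (fun s => f0 s + (- (a + b) * f1 s + (a * f2 s + b * f3 s)))).
  { intros s. unfold vmix. ring. }
  repeat apply filterlim_plus_0; try apply filterlim_scal_0; assumption.
Qed.

Definition Vself (Pr Sc a b : R) (Y t : R) : R :=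
  vmix a b (self_similar 2 1 erfc4 Y t) (self_similar 1 1 erfc2 Y t)
    (self_similar 1 (sqrt Pr) erfc2 Y t) (self_similar 1 (sqrt Sc) erfc2 Y t).

Lemma Vsol_Vself Pr Sc Gr Gc alpha Y t : 0 < Pr -> 0 < Sc -> 0 < t ->
  Vsol Pr Sc Gr Gc alpha Y t = Vself Pr Sc (acoef Gr Pr alpha) (bcoef Gc Sc alpha) Y t.
Proof.
  intros HP HS Ht. unfold Vsol. destruct (Rle_dec t 0); [lra|]. cbv zeta.
  unfold Vself, vmix, self_similar, erfc2, erfc4, gauss.
  rewrite !Rmult_1_r, !Rpow_mult_distr, !pow2_sqrt by lra.
  replace (- (eta Y t ^ 2 * Pr)) with (- eta Y t ^ 2 * Pr) by ring.
  replace (- (eta Y t ^ 2 * Sc)) with (- eta Y t ^ 2 * Sc) by ring.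
  pose proof sqrt_PI_pos. field. lra.
Qed.

Lemma self_similar_erfc2_rate c Y t : 0 < t ->
  self_similar 1 c (fun x => INR 1 * erfc2 x - x * erfc2' x / 2) Y t / t = erfc (eta Y t * c).
Proof. intros Ht. unfold self_similar. rewrite erfc2_rate. field. lra. Qed.

Section VselfDerivatives.

Variables (Pr Sc a b Y t : R).
Hypothesis (Ht : 0 < t).

Let rate2 (x : R) : R := INR 2 * erfc4 x - x * erfc4' x / 2.
Let rate1 (x : R) : R := INR 1 * erfc2 x - x * erfc2' x / 2.

Lemma is_derive_Vself_t :
  is_derive (fun s => Vself Pr Sc a b Y s) t
    (vmix a b (self_similar 2 1 rate2 Y t / t) (self_similar 1 1 rate1 Y t / t)
       (erfc (eta Y t * sqrt Pr)) (erfc (eta Y t * sqrt Sc))).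
Proof.
  rewrite <- (self_similar_erfc2_rate (sqrt Pr) Y t Ht),
    <- (self_similar_erfc2_rate (sqrt Sc) Y t Ht).
  apply is_derive_vmix; apply is_derive_self_similar_t;
    try exact Ht; [apply erfc4_profile | apply erfc2_profile ..].
Qed.

Lemma is_derive_Vself_Y y :
  is_derive (fun z => Vself Pr Sc a b z t) y
    (vmix a b (1 / (2 * sqrt t) * self_similar 2 1 erfc4' y t)
       (1 / (2 * sqrt t) * self_similar 1 1 erfc2' y t)
       (sqrt Pr / (2 * sqrt t) * self_similar 1 (sqrt Pr) erfc2' y t)
       (sqrt Sc / (2 * sqrt t) * self_similar 1 (sqrt Sc) erfc2' y t)).
Proof.
  apply is_derive_vmix; apply is_derive_self_similar_Y;
    try exact Ht; [apply (proj1 erfc4_profile) | apply (proj1 erfc2_profile) ..].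
Qed.

Lemma is_derive_Vself_YY :
  is_derive (fun y => Derive (fun z => Vself Pr Sc a b z t) y) Y
    (vmix a b (1 ^ 2 * (self_similar 2 1 rate2 Y t / t))
       (1 ^ 2 * (self_similar 1 1 rate1 Y t / t))
       (sqrt Pr ^ 2 * erfc (eta Y t * sqrt Pr)) (sqrt Sc ^ 2 * erfc (eta Y t * sqrt Sc))).
Proof.
  apply (is_derive_ext (fun y => vmix a b
      (Derive (fun z => self_similar 2 1 erfc4 z t) y)
      (Derive (fun z => self_similar 1 1 erfc2 z t) y)
      (Derive (fun z => self_similar 1 (sqrt Pr) erfc2 z t) y)
      (Derive (fun z => self_similar 1 (sqrt Sc) erfc2 z t) y))).
  { intros y. symmetry. apply is_derive_unique, is_derive_vmix; apply Derive_correct;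
      eexists; apply is_derive_self_similar_Y;
      try exact Ht; [apply (proj1 erfc4_profile) | apply (proj1 erfc2_profile) ..]. }
  rewrite <- (self_similar_erfc2_rate (sqrt Pr) Y t Ht),
    <- (self_similar_erfc2_rate (sqrt Sc) Y t Ht).
  apply is_derive_vmix; apply is_derive_self_similar_YY;
    try exact Ht; [apply erfc4_profile | apply erfc2_profile ..].
Qed.

End VselfDerivatives.

Lemma Vsol_heat Pr Sc Gr Gc alpha Y t : 0 < Pr -> 0 < Sc -> Pr <> 1 -> Sc <> 1 -> 0 < t ->
  let V := Vsol Pr Sc Gr Gc alpha in
  ex_derive (fun s => V Y s) t /\ ex_derive (fun y => V y t) Y /\
  ex_derive (fun y => Derive (fun z => V z t) y) Y /\
  Derive (fun s => V Y s) t
    = Gr * Tsol Pr Y t * cos alpha + Gc * Phisol Sc Y t * cos alpha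
      + Derive (fun y => Derive (fun z => V z t) y) Y.
Proof.
  intros HP HS HP1 HS1 Ht V.
  set (a := acoef Gr Pr alpha). set (b := bcoef Gc Sc alpha).
  destruct (derivatives_ext_pos (Vself Pr Sc a b) V Y t _ _ Ht
              (fun y s Hs => eq_sym (Vsol_Vself Pr Sc Gr Gc alpha y s HP HS Hs))
              (is_derive_Vself_t Pr Sc a b Y t Ht)
              (fun y => ex_intro _ _ (is_derive_Vself_Y Pr Sc a b t Ht y))
              (is_derive_Vself_YY Pr Sc a b Y t Ht))
    as (Hex_t & Hex_Y & Hex_YY & -> & ->).
  repeat split; try assumption.
  unfold Tsol, Phisol. destruct (Rle_dec t 0); [lra|].
  unfold vmix, a, b, acoef, bcoef. rewrite !pow2_sqrt by lra.
  field. split; lra.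
Qed.

Lemma Tsol_initial_limit P Y : 0 < P -> 0 < Y -> is_lim (fun t => Tsol P Y t) 0 0.
Proof.
  intros HP HY. apply is_lim_0_of_at_right.
  - intros s Hs. unfold Tsol. destruct (Rle_dec s 0); [reflexivity | lra].
  - apply (filterlim_ext_loc (fun s => self_similar 0 (sqrt P) erfc Y s)).
    + apply (filter_imp (fun s => 0 < s)); [|apply eventually_pos_at_right_0].
      intros s Hs. symmetry. apply Tsol_self_similar, Hs.
    + apply self_similar_at_right_0; [exact HY | apply sqrt_lt_R0, HP | apply is_lim_erfc].
Qed.

Lemma Vsol_initial_limit Pr Sc Gr Gc alpha Y : 0 < Pr -> 0 < Sc -> 0 < Y ->
  is_lim (fun t => Vsol Pr Sc Gr Gc alpha Y t) 0 0.
Proof.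
  intros HP HS HY. apply is_lim_0_of_at_right.
  - intros s Hs. unfold Vsol. destruct (Rle_dec s 0); [reflexivity | lra].
  - apply (filterlim_ext_loc (Vself Pr Sc (acoef Gr Pr alpha) (bcoef Gc Sc alpha) Y)).
    + apply (filter_imp (fun s => 0 < s)); [|apply eventually_pos_at_right_0].
      intros s Hs. symmetry. apply Vsol_Vself; assumption.
    + apply filterlim_vmix_0; apply self_similar_at_right_0;
        auto using sqrt_lt_R0, is_lim_erfc2, is_lim_erfc4; lra.
Qed.

Lemma Tsol_limit_infty P t : 0 < P -> 0 < t -> is_lim (fun Y => Tsol P Y t) p_infty 0.
Proof.
  intros HP Ht. apply (is_lim_ext (fun Y => self_similar 0 (sqrt P) erfc Y t)).
  - intros Y. symmetry. apply Tsol_self_similar, Ht.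
  - apply is_lim_self_similar_Y; [exact Ht | apply sqrt_lt_R0, HP | apply is_lim_erfc].
Qed.

Lemma Vsol_limit_infty Pr Sc Gr Gc alpha t : 0 < Pr -> 0 < Sc -> 0 < t ->
  is_lim (fun Y => Vsol Pr Sc Gr Gc alpha Y t) p_infty 0.
Proof.
  intros HP HS Ht.
  apply (is_lim_ext (fun Y => Vself Pr Sc (acoef Gr Pr alpha) (bcoef Gc Sc alpha) Y t)).
  - intros Y. symmetry. apply Vsol_Vself; assumption.
  - apply filterlim_vmix_0; apply is_lim_self_similar_Y;
      auto using sqrt_lt_R0, is_lim_erfc2, is_lim_erfc4; lra.
Qed.

Lemma solutions_at_plate Pr Sc Gr Gc alpha t : 0 < t ->
  Vsol Pr Sc Gr Gc alpha 0 t = t ^ 2 /\ Tsol Pr 0 t = 1 /\ Phisol Sc 0 t = 1.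
Proof.
  intros Ht. unfold Vsol, Tsol, Phisol. destruct (Rle_dec t 0); [lra|]. cbv zeta.
  rewrite eta_0_l, !Rmult_0_l, erfc_0. pose proof sqrt_PI_pos.
  repeat split. field. lra.
Qed.

Theorem mainTheorem1 (Pr Sc Gr Gc alpha : R) :
  0 < Pr -> 0 < Sc -> Pr <> 1 -> Sc <> 1 ->
  let V := Vsol Pr Sc Gr Gc alpha in
  let T := Tsol Pr in
  let phi := Phisol Sc in
  (* governing equations *)
  (forall Y t, 0 < Y -> 0 < t ->
     ex_derive (fun s => V Y s) t /\ ex_derive (fun y => V y t) Y /\
     ex_derive (fun y => Derive (fun z => V z t) y) Y /\
     ex_derive (fun s => T Y s) t /\ ex_derive (fun y => T y t) Y /\
     ex_derive (fun y => Derive (fun z => T z t) y) Y /\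
     ex_derive (fun s => phi Y s) t /\ ex_derive (fun y => phi y t) Y /\
     ex_derive (fun y => Derive (fun z => phi z t) y) Y /\
     Derive (fun s => V Y s) t
       = Gr * T Y t * cos alpha + Gc * phi Y t * cos alpha
         + Derive (fun y => Derive (fun z => V z t) y) Y /\
     Pr * Derive (fun s => T Y s) t = Derive (fun y => Derive (fun z => T z t) y) Y /\
     Sc * Derive (fun s => phi Y s) t
       = Derive (fun y => Derive (fun z => phi z t) y) Y) /\
  (* initial conditions *)
  (forall Y t, 0 <= Y -> t <= 0 -> V Y t = 0 /\ T Y t = 0 /\ phi Y t = 0) /\
  (forall Y, 0 < Y ->
     is_lim (fun t => V Y t) 0 0 /\ is_lim (fun t => T Y t) 0 0 /\
     is_lim (fun t => phi Y t) 0 0) /\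
  (* boundary conditions at Y = 0 *)
  (forall t, 0 < t -> V 0 t = t ^ 2 /\ T 0 t = 1 /\ phi 0 t = 1) /\
  (* conditions at infinity *)
  (forall t, 0 < t ->
     is_lim (fun Y => V Y t) p_infty 0 /\ is_lim (fun Y => T Y t) p_infty 0 /\
     is_lim (fun Y => phi Y t) p_infty 0).
Proof.
  intros HP HS HP1 HS1 V T phi.
  split; [|split; [|split; [|split]]].
  - intros Y t _ Ht.
    destruct (Vsol_heat Pr Sc Gr Gc alpha Y t HP HS HP1 HS1 Ht) as (V1 & V2 & V3 & V4).
    destruct (Tsol_heat Pr Y t HP Ht) as (T1 & T2 & T3 & T4).
    destruct (Tsol_heat Sc Y t HS Ht) as (P1 & P2 & P3 & P4).
    repeat split; assumption.
  - intros Y t _ Ht. unfold V, T, phi, Vsol, Tsol, Phisol.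
    destruct (Rle_dec t 0); [|lra]. repeat split.
  - intros Y HY. repeat split;
      [apply Vsol_initial_limit | apply Tsol_initial_limit | apply (Tsol_initial_limit Sc)];
      assumption.
  - intros t Ht. apply solutions_at_plate, Ht.
  - intros t Ht. repeat split;
      [apply Vsol_limit_infty | apply Tsol_limit_infty | apply (Tsol_limit_infty Sc)]; assumption.
Qed.
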